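(* Let $P=\{p_1,\dots,p_n\}$ be a set of $n$ distinct points in the plane and, for $\varepsilon>0$, let $f$ be the stacking order of $\mathcal{D}(\varepsilon P)$ given by $f(D(\varepsilon p_i))=i$ for $i=1,\dots,n$. Then $$\lim_{\varepsilon\to 0}\mathrm{vis}(\mathcal{D}(\varepsilon P),f)=\sum_{i=1}^n \tau_i,$$ where $\tau_1=2\pi$, and for $i\ge 2$: $\tau_i=0$ if $p_i\in\mathrm{conv}\{p_1,\dots,p_{i-1}\}$, and otherwise $\tau_i$ is the external angle of the convex set $\mathrm{conv}\{p_1,\dots,p_i\}$ at its vertex $p_i$.
   Context: For a point $p$ in the plane, $D(p)$ denotes the closed disk of radius $1$ centered at $p$, and for a finite point set $Q$, $\mathcal{D}(Q)=\{D(q): q\in Q\}$; $\varepsilon P=\{\varepsilon p: p\in P\}$ where $\varepsilon(x,y)=(\varepsilon x,\varepsilon y)$. A stacking order of a finite collection $\mathcal{D}$ of $n$ distinct unit disks is a bijection $f:\mathcal{D}\to\{1,\dots,n\}$; $f(D)$ is regarded as the height of $D$, and the arrangement is viewed from below. A point $x$ on the boundary circle of $D\in\mathcal{D}$ is visible if $x$ does not lie in any disk $D'\in\mathcal{D}$ with $f(D')<f(D)$. The visible perimeter $\mathrm{vis}(\mathcal{D},f)$ is the total length of all visible boundary points, summed over all disks. The external angle at a vertex $p_i$ is $\pi$ minus the interior angle at $p_i$; equivalently, it is the angle between the outward unit normals of the two sides meeting at $p_i$. If $\mathrm{conv}\{p_1,\dots,p_i\}$ is a segment with endpoint $p_i$,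 the external angle at $p_i$ is $\pi$. *)

From HB Require Import structures.
From mathcomp Require Import all_boot all_order all_algebra.
From mathcomp Require Import all_classical all_reals all_analysis.
Set Implicit Arguments. Unset Strict Implicit. Unset Printing Implicit Defensive.
Import Order.TTheory GRing.Theory Num.Theory.
Import numFieldNormedType.Exports.
Local Open Scope classical_set_scope.
Local Open Scope ring_scope.

Section Defs.
Variable R : realType.

Definition pt := (R * R)%type.

Definition in_disk (c x : pt) : Prop := (x.1 - c.1) ^+ 2 + (x.2 - c.2) ^+ 2 <= 1.

Definition circ (c : pt) (t : R) : pt := (c.1 + cos t, c.2 + sin t).

Definition scale (e : R) (p : pt) : pt := (e * p.1, e * p.2).

(* Disks D(c_0), ..., D(c_{n-1}) with stacking order f(D(c_i)) = i (0-indexed).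
   Parameter set of the visible part of the boundary of D(c_i): the points not
   lying in any disk of smaller height. *)
Definition visible_params n (c : 'I_n -> pt) (i : 'I_n) : set R :=
  [set t | 0 <= t < 2 * pi /\
           forall j : 'I_n, (j < i)%N -> ~ in_disk (c j) (circ (c i) t)].

(* visible perimeter: total arc length (= Lebesgue measure of the parameter
   set, radius 1) of the visible boundary points, summed over all disks *)
Definition vis n (c : 'I_n -> pt) : \bar R :=
  (\sum_(i < n) (@lebesgue_measure R) (visible_params c i))%E.

Definition in_conv_prefix n (p : 'I_n -> pt) (i : nat) (x : pt) : Prop :=
  exists w : 'I_n -> R,
    [/\ forall j : 'I_n, 0 <= w j,
        forall j : 'I_n, ~~ (j < i)%N -> w j = 0,
        \sum_(j < n) w j = 1
      & x = (\sum_(j < n) w j * (p j).1, \sum_(j < n) w j * (p j).2)].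

Definition norm2 (u : pt) : R := Num.sqrt (u.1 ^+ 2 + u.2 ^+ 2).

Definition vangle (u v : pt) : R :=
  acos ((u.1 * v.1 + u.2 * v.2) / (norm2 u * norm2 v)).

Definition vsub (x y : pt) : pt := (x.1 - y.1, x.2 - y.2).

(* Interior angle of conv {p_0, ..., p_i} at the vertex p_i (assuming p_i is not
   in conv {p_0,...,p_{i-1}}): the largest angle subtended at p_i by two of the
   points p_j, p_k (j, k < i); this is the angle between the two edges of the
   hull at p_i, and it is 0 when the hull is a segment with endpoint p_i. *)
Definition interior_angle n (p : 'I_n -> pt) (i : 'I_n) : R :=
  \big[Num.max/0]_(j < n | (j < i)%N)
    \big[Num.max/0]_(k < n | (k < i)%N)
      vangle (vsub (p j) (p i)) (vsub (p k) (p i)).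

(* tau_i (0-indexed: index 0 is the paper's p_1) *)
Definition tau n (p : 'I_n -> pt) (i : 'I_n) : R :=
  if (i : nat) == 0%N then 2 * pi
  else if `[< in_conv_prefix p i (p i) >] then 0
  else pi - interior_angle p i.

End Defs.

From HB Require Import structures.
From mathcomp Require Import all_boot all_order all_algebra.
From mathcomp Require Import all_classical all_reals all_analysis.
From mathcomp Require Import ring lra measurable_realfun.
Import Order.TTheory GRing.Theory Num.Theory.
Import numFieldNormedType.Exports.
Local Open Scope classical_set_scope.
Local Open Scope ring_scope.

Set Implicit Arguments. Unset Strict Implicit. Unset Printing Implicit Defensive.

(* The boundary point eps p_i + (cos t, sin t) of the i-th disk lies outside
   D(eps p_j) iff 2 (cos t, sin t).(p_i - p_j) + eps |p_i - p_j|^2 > 0.  As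
   eps decreases to 0 these visible parameter sets decrease to the closed arc
   of directions making a nonnegative inner product with every p_i - p_j,
   j < i, so by continuity from above of Lebesgue measure the visible length
   tends to the length of that arc.  The arc is the whole circle for the first
   disk.  If p_i is a convex combination of earlier points, every direction of
   the arc is orthogonal to some p_i - p_j, so the arc is negligible.
   Otherwise, if p_j, p_k subtend the largest angle at p_i, every other p_l lies
   in the cone they span (else p_i would be in the triangle p_j p_k p_l), so the
   arc is the intersection of two half-circles, of length pi minus that angle. *)

Section PlaneGeometry.
Variable R : realFieldType.
Implicit Types (u v w : R * R) (a b c s x y : R).

Definition dotp u v : R := u.1 * v.1 + u.2 * v.2.
Definition crossp u v : R := u.1 * v.2 - u.2 * v.1.

Lemma dotpC u v : dotp u v = dotp v u.
Proof. by rewrite /dotp mulrC [u.2 * _]mulrC. Qed.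

Lemma dotp_crossp_sqr u v :
  dotp u v ^+ 2 + crossp u v ^+ 2 = dotp u u * dotp v v.
Proof. by rewrite /dotp /crossp; ring. Qed.

Lemma dotp_unit_bound u v :
  dotp u u = 1 -> dotp v v = 1 -> -1 <= dotp u v <= 1.
Proof.
move=> uu vv; have := dotp_crossp_sqr u v; rewrite uu vv mulr1.
have := sqr_ge0 (crossp u v) => h1 h2; apply/andP; split; nra.
Qed.

Lemma unit_eq_of_dotp_ge1 u v :
  dotp u u = 1 -> dotp v v = 1 -> 1 <= dotp u v -> u = v.
Proof.
case: u v => [u1 u2] [v1 v2]; rewrite /dotp /= => uu vv uv.
have d : (u1 - v1) ^+ 2 + (u2 - v2) ^+ 2 <= 0 by nra.
have := sqr_ge0 (u1 - v1); have := sqr_ge0 (u2 - v2) => h2 h1.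
have /eqP : (u1 - v1) ^+ 2 = 0 by lra.
have /eqP : (u2 - v2) ^+ 2 = 0 by lra.
by rewrite !sqrf_eq0 !subr_eq0 => /eqP -> /eqP ->.
Qed.

Lemma le_of_sqr_le a b : 0 <= a -> b ^+ 2 <= a ^+ 2 -> b <= a.
Proof. by move=> a0 h; nra. Qed.

(* Unit vectors (c, s) and (x, y) of the upper half-plane: the one with the
   larger first coordinate has the smaller polar angle. *)
Lemma sin_sub_ge0_upper c s x y :
  c ^+ 2 + s ^+ 2 = 1 -> x ^+ 2 + y ^+ 2 = 1 -> 0 <= s -> 0 <= y ->
  c <= x -> y * c <= x * s.
Proof.
move=> cs xy s0 y0 cx.
have E : (x * s) ^+ 2 - (y * c) ^+ 2 = x ^+ 2 - c ^+ 2.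
  have es : s ^+ 2 = 1 - c ^+ 2 by lra.
  have ey : y ^+ 2 = 1 - x ^+ 2 by lra.
  by rewrite !exprMn es ey; ring.
have [c0|c0] := lerP 0 c; first by apply: le_of_sqr_le; nra.
have [x0|x0] := lerP 0 x; first by nra.
suff : - (x * s) <= - (y * c) by lra.
by apply: le_of_sqr_le; rewrite ?sqrrN; nra.
Qed.

(* In polar form (c, s) = e^(ia) and (x, y) = e^(ib) the hypotheses read
   cos a <= cos b and cos a <= cos (a - b), the conclusion
   0 <= sin b * sin (a - b). *)
Lemma sin_sub_between c s x y :
  c ^+ 2 + s ^+ 2 = 1 -> x ^+ 2 + y ^+ 2 = 1 ->
  c <= x -> c <= x * c + y * s -> 0 <= y * (x * s - y * c).
Proof.
wlog s0 : s y / 0 <= s.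
  move=> W cs xy cx cxy; have [s0|s0] := lerP 0 s; first exact: W.
  have := W (- s) (- y); rewrite !sqrrN mulrNN.
  have -> : x * - s - - y * c = - (x * s - y * c) by ring.
  by rewrite mulrNN; apply => //; lra.
move=> cs xy cx cxy.
have [y0|y0] := lerP 0 y; first by have := sin_sub_ge0_upper cs xy s0 y0 cx; nra.
have [z0|z0] := lerP 0 (x * s - y * c); last by nra.
have xy' : (x * c + y * s) ^+ 2 + (x * s - y * c) ^+ 2 = 1.
  by rewrite -[1]mulr1 -{1}cs -xy; ring.
have := sin_sub_ge0_upper cs xy' s0 z0 cxy.
have : (x * c + y * s) * s - (x * s - y * c) * c = y * (c ^+ 2 + s ^+ 2) by ring.
by rewrite cs mulr1; lra.
Qed.

(* A unit vector v at least as close to e1 and to e2 as these are to each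
   other lies in the angle between them: e1, v, e2 turn the same way. *)
Lemma crossp_between (e1 e2 v : R * R) :
  dotp e1 e1 = 1 -> dotp e2 e2 = 1 -> dotp v v = 1 ->
  dotp e1 e2 <= dotp v e1 -> dotp e1 e2 <= dotp v e2 ->
  0 <= crossp e1 v * crossp v e2.
Proof.
move=> u1 u2 uv h1 h2; rewrite [dotp v e1]dotpC in h1.
have := @sin_sub_between (dotp e1 e2) (crossp e1 e2) (dotp e1 v) (crossp e1 v).
rewrite !dotp_crossp_sqr u1 u2 uv !mulr1.
have -> : dotp e1 v * dotp e1 e2 + crossp e1 v * crossp e1 e2 =
  dotp e1 e1 * dotp v e2 by rewrite /dotp /crossp; ring.
have -> : dotp e1 v * crossp e1 e2 - crossp e1 v * dotp e1 e2 =
  dotp e1 e1 * crossp v e2 by rewrite /dotp /crossp; ring.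
by rewrite u1 !mul1r; apply.
Qed.

Lemma cone_or_dependence (e1 e2 v : R * R) :
  dotp e1 e1 = 1 -> dotp e2 e2 = 1 -> dotp v v = 1 -> -1 < dotp e1 e2 ->
  dotp e1 e2 <= dotp v e1 -> dotp e1 e2 <= dotp v e2 ->
  (forall w, 0 <= dotp w e1 -> 0 <= dotp w e2 -> 0 <= dotp w v) \/
  exists l0 l1 l2 : R, [/\ 0 < l0, 0 <= l1, 0 <= l2,
    l0 * v.1 + l1 * e1.1 + l2 * e2.1 = 0 & l0 * v.2 + l1 * e1.2 + l2 * e2.2 = 0].
Proof.
move=> u1 u2 uv c1 h1 h2.
set D := crossp e1 e2; set A := crossp v e2; set B := crossp e1 v.
have [D0|D0] := eqVneq D 0.
  have c_eq1 : dotp e1 e2 = 1.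
    have := dotp_crossp_sqr e1 e2; rewrite -/D D0 u1 u2 mulr1 expr0n addr0 /=.
    have := dotp_unit_bound u1 u2; move=> /andP[_ c2] cc.
    by apply/eqP; rewrite eq_le c2 /=; nra.
  have -> : v = e1 by apply: unit_eq_of_dotp_ge1; rewrite // -c_eq1.
  by left.
have Ev1 : D * v.1 = A * e1.1 + B * e2.1 by rewrite /D /A /B /crossp; ring.
have Ev2 : D * v.2 = A * e1.2 + B * e2.2 by rewrite /D /A /B /crossp; ring.
have AB : 0 <= A * B by rewrite mulrC; apply: crossp_between.
have D2 : 0 < D ^+ 2 by rewrite exprn_even_gt0.
have [/andP[AD BD]|] := boolP ((0 <= A * D) && (0 <= B * D)).
  left => w w1 w2; rewrite -(pmulr_rge0 _ D2).
  have -> : D ^+ 2 * dotp w v = D * (w.1 * (D * v.1) + w.2 * (D * v.2)).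
    by rewrite /dotp; ring.
  have -> : D * (w.1 * (D * v.1) + w.2 * (D * v.2)) =
    A * D * dotp w e1 + B * D * dotp w e2 by rewrite Ev1 Ev2 /dotp; ring.
  by apply: addr_ge0; apply: mulr_ge0.
rewrite negb_and -!ltNge => ADBD.
have ABD : 0 <= A * D * (B * D).
  have -> : A * D * (B * D) = A * B * D ^+ 2 by ring.
  by rewrite mulr_ge0 // ltW.
right; exists (D ^+ 2), (- (A * D)), (- (B * D)); split => //.
- by rewrite oppr_ge0; case/orP: ADBD; nra.
- by rewrite oppr_ge0; case/orP: ADBD; nra.
- have -> : D ^+ 2 * v.1 + - (A * D) * e1.1 + - (B * D) * e2.1 =
    D * (D * v.1 - A * e1.1 - B * e2.1) by ring.
  by rewrite Ev1; ring.
- have -> : D ^+ 2 * v.2 + - (A * D) * e1.2 + - (B * D) * e2.2 =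
    D * (D * v.2 - A * e1.2 - B * e2.2) by ring.
  by rewrite Ev2; ring.
Qed.

End PlaneGeometry.

Section PlaneGeometryRcf.
Variable R : rcfType.

Lemma halfplanes_inter_iff (e1 e2 w : R * R) :
  dotp e1 e1 = 1 -> dotp e2 e2 = 1 -> dotp w w = 1 -> -1 < dotp e1 e2 ->
  (0 <= dotp w e1 /\ 0 <= dotp w e2) <->
  Num.sqrt (1 - dotp e1 e2 ^+ 2) <= dotp w e1 + dotp w e2.
Proof.
move=> u1 u2 uw c1.
have gram : (dotp w e1 + dotp w e2) ^+ 2 =
    crossp e1 e2 ^+ 2 + 2 * (dotp w e1 * dotp w e2) * (1 + dotp e1 e2).
  have G : dotp w e1 ^+ 2 * dotp e2 e2 + dotp w e2 ^+ 2 * dotp e1 e1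
      - 2 * (dotp w e1 * dotp w e2) * dotp e1 e2 = dotp w w * crossp e1 e2 ^+ 2.
    by rewrite /dotp /crossp; ring.
  by rewrite u1 u2 uw !mulr1 mul1r in G; rewrite -G; ring.
have SS : Num.sqrt (1 - dotp e1 e2 ^+ 2) ^+ 2 = crossp e1 e2 ^+ 2.
  have E : 1 - dotp e1 e2 ^+ 2 = crossp e1 e2 ^+ 2.
    by have := dotp_crossp_sqr e1 e2; rewrite u1 u2 mulr1; lra.
  by rewrite E sqr_sqrtr ?sqr_ge0.
move: gram SS c1; set a := dotp w e1; set b := dotp w e2; set c := dotp e1 e2.
set S := Num.sqrt _; have S0 : 0 <= S := sqrtr_ge0 _.
move=> gram SS c1; split.
  move=> [a0 b0]; apply: le_of_sqr_le; first by lra.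
  rewrite SS gram lerDl; apply: mulr_ge0; last by lra.
  by rewrite mulr_ge0 // mulr_ge0.
move=> h.
have ab : 0 <= a * b.
  have : S ^+ 2 <= (a + b) ^+ 2 by nra.
  rewrite SS gram lerDl => h'; nra.
split; nra.
Qed.

End PlaneGeometryRcf.

Section LebesgueTranslation.
Variables (R : realType) (a : R).
Notation mu := (@lebesgue_measure R).

Let shift (x : R) := x + a.

Let measurable_shift : measurable_fun setT shift.
Proof. by apply: continuous_measurable_fun => x; apply: cvgD; [exact: cvg_id|exact: cvg_cst]. Qed.

Let mu_shift (A : set (measurableTypeR R)) : \bar R := mu (shift @^-1` A).

Let mu_shift0 : mu_shift set0 = 0%E.
Proof. by rewrite /mu_shift preimage_set0 measure0. Qed.

Let mu_shift_ge0 A : (0 <= mu_shift A)%E.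
Proof. exact: measure_ge0. Qed.

Let mu_shift_sigma_additive : semi_sigma_additive mu_shift.
Proof.
move=> F mF tF mUF; rewrite /mu_shift preimage_bigcup.
have mpre B : measurable B -> measurable (shift @^-1` B).
  by move=> mB; rewrite -[X in measurable X]setTI; exact: measurable_shift.
apply: measure_semi_sigma_additive.
- by move=> k; exact: mpre (mF k).
- apply/trivIsetP => /= i j _ _ ij; rewrite -preimage_setI.
  by move/trivIsetP : tF => /(_ _ _ _ _ ij) ->; rewrite ?preimage_set0.
- by rewrite -preimage_bigcup; exact: mpre mUF.
Qed.

HB.instance Definition _ := isMeasure.Build _ _ _
  mu_shift mu_shift0 mu_shift_ge0 mu_shift_sigma_additive.

Lemma lebesgue_measure_shift (A : set R) :
  measurable A -> mu ((fun x => x + a) @^-1` A) = mu A.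
Proof.
move=> mA; apply/esym; apply: (lebesgue_measure_unique (mu := mu_shift)) => //.
move=> _ [[x y] _ <-]; change (mu `]x, y] = mu (shift @^-1` `]x, y])).
have -> : shift @^-1` `]x, y] = `](x - a), (y - a)]%classic.
  by apply/seteqP; split => z /=; rewrite /shift !in_itv /= => /andP[? ?];
    apply/andP; split; lra.
rewrite !lebesgue_measure_itv /= !lte_fin ltrD2r; case: ifP => // _.
by rewrite -!EFinD; congr (_%:E); ring.
Qed.

End LebesgueTranslation.

Section CircleMeasure.
Variable R : realType.
Notation mu := (@lebesgue_measure R).

Definition cis (t : R) : R * R := (cos t, sin t).

Definition window (a b : R) (S : set R) : set R := [set t | a <= t < b /\ S t].

Lemma dotp_cis_cis t : dotp (cis t) (cis t) = 1.
Proof. by rewrite /dotp /= -!expr2 cos2Dsin2. Qed.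

Lemma continuous_dotp_cis (m : R * R) : continuous (fun t => dotp (cis t) m).
Proof.
move=> x; apply: cvgD; apply: cvgM; try exact: cvg_cst.
  exact: continuous_cos.
exact: continuous_sin.
Qed.

Lemma measurable_halfopen (a b : R) : measurable [set t : R | a <= t < b].
Proof.
have -> : [set t : R | a <= t < b] = `[a, b[%classic.
  by apply/seteqP; split => x /=; rewrite in_itv.
exact: measurable_itv.
Qed.

Lemma lebesgue_measure_halfopen (a b : R) :
  a <= b -> mu [set t | a <= t < b] = (b - a)%:E.
Proof.
move=> ab; have -> : [set t : R | a <= t < b] = `[a, b[%classic.
  by apply/seteqP; split => x /=; rewrite in_itv.
rewrite lebesgue_measure_itv /= lte_fin; case: ltgtP ab => // <- _.
by rewrite subrr.
Qed.

Lemma measurable_window a b (S : set R) : measurable S -> measurable (window a b S).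
Proof. exact: measurableI (measurable_halfopen a b). Qed.

Lemma measurable_continuous_ge (f : R -> R) (c : R) :
  continuous f -> measurable [set x | c <= f x].
Proof.
move=> cf; have -> : [set x | c <= f x] = f @^-1` `[c, +oo[.
  by apply/seteqP; split => x /=; rewrite in_itv /= andbT.
by rewrite -[_ @^-1` _]setTI; apply: continuous_measurable_fun.
Qed.

Lemma measurable_continuous_gt (f : R -> R) (c : R) :
  continuous f -> measurable [set x | c < f x].
Proof.
move=> cf; have -> : [set x | c < f x] = f @^-1` `]c, +oo[.
  by apply/seteqP; split => x /=; rewrite in_itv /= andbT.
by rewrite -[_ @^-1` _]setTI; apply: continuous_measurable_fun.
Qed.

Lemma measurable_continuous_eq (f : R -> R) (c : R) :
  continuous f -> measurable [set x | f x = c].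
Proof.
move=> cf; rewrite -[X in measurable X]setTI.
exact: (continuous_measurable_fun cf) measurableT _ (measurable_set1 c).
Qed.

Lemma window_split a b c (S : set R) : a <= b <= c -> measurable S ->
  mu (window a c S) = (mu (window a b S) + mu (window b c S))%E.
Proof.
move=> /andP[ab bc] mS; rewrite -measureU; try exact: measurable_window.
  congr (mu _); apply/seteqP; split => x /=.
    move=> [/andP[h1 h2] Sx]; have [xb|xb] := ltP x b.
      by left; split => //; apply/andP; split.
    by right; split => //; apply/andP; split.
  by move=> [][/andP[h1 h2] Sx]; split => //; apply/andP; split; lra.
by apply/seteqP; split => x //= [[/andP[_ h1] _] [/andP[h2 _] _]]; lra.
Qed.

Lemma window_shift a b c (S : set R) : measurable S ->
  mu (window (a + c) (b + c) S) = mu (window a b (fun x => S (x + c))).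
Proof.
move=> mS; rewrite -(lebesgue_measure_shift c); last exact: measurable_window.
by congr (mu _); apply/seteqP; split => x [/andP[h1 h2] Sx];
  split => //; apply/andP; split; lra.
Qed.

Lemma window_period (T : R) a b (S : set R) : measurable S ->
  (forall x, S (x + T) = S x) -> a <= b <= a + T ->
  mu (window a (a + T) S) = mu (window b (b + T) S).
Proof.
move=> mS per /andP[ab bT].
rewrite (@window_split _ b) ?ab ?bT // (@window_split _ (a + T) (b + T)) //;
  last by apply/andP; split; lra.
rewrite addeC window_shift //; congr (_ + mu _)%E.
by apply/seteqP; split => x [h1 h2]; split => //; rewrite ?per in h2 *.
Qed.

End CircleMeasure.

Lemma measureI_eq0 d (T : measurableType d) (R : realType)
    (nu : {measure set T -> \bar R}) (A B : set T) :
  measurable A -> measurable B -> (nu A < +oo)%E -> (nu B < +oo)%E ->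
  nu (A `|` B) = (nu A + nu B)%E -> nu (A `&` B) = 0%E.
Proof.
move=> mA mB Afin Bfin AB.
have [Af Bf] : nu A \is a fin_num /\ nu B \is a fin_num by rewrite !ge0_fin_numE.
have ABf : nu (A `&` B) \is a fin_num.
  rewrite ge0_fin_numE //; apply: le_lt_trans Afin.
  by apply: le_measure; rewrite ?inE; [exact: measurableI | exact: mA | apply: subIsetl].
have := measureUfinl mA mB Afin; rewrite AB.
rewrite -(fineK Af) -(fineK Bf) -(fineK ABf) -!EFinD => -[h].
by congr (_%:E); lra.
Qed.

Section Arcs.
Variable R : realType.
Notation mu := (@lebesgue_measure R).

Lemma polar_unit (m : R * R) : dotp m m = 1 ->
  exists psi : R, [/\ -pi <= psi <= pi, cos psi = m.1 & sin psi = m.2].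
Proof.
case: m => [m1 m2]; rewrite /dotp /= => h.
have m1r : -1 <= m1 <= 1 by apply/andP; split; nra.
have e2 : Num.sqrt (1 - m1 ^+ 2) = `|m2|.
  by rewrite (_ : 1 - m1 ^+ 2 = m2 ^+ 2) ?sqrtr_sqr // -h; ring.
have a0 := acos_ge0 m1r; have api := acos_lepi m1r; have := pi_ge0 R => pi0.
have [m20|m20] := lerP 0 m2.
  exists (acos m1); split; first by apply/andP; split; lra.
  - exact: acosK.
  - by rewrite sin_acos // e2 ger0_norm.
exists (- acos m1); split; first by apply/andP; split; lra.
- by rewrite cosN acosK.
- by rewrite sinN sin_acos // e2 ltr0_norm // opprK.
Qed.

Lemma le_of_acos_le (x y : R) : -1 <= x <= 1 -> -1 <= y <= 1 ->
  acos x <= acos y -> y <= x.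
Proof.
move=> hx hy h; rewrite -(@acosK R x) ?in_itv //= -(@acosK R y) ?in_itv //=.
rewrite leNgt; apply/negP; rewrite ltr_cos ?in_itv /= ?acos_ge0 ?acos_lepi //.
by rewrite ltNge h.
Qed.

Lemma window_cos_ge (s : R) : 0 <= s <= 1 ->
  window (- pi) (- pi + 2 * pi) [set r | s <= cos r] = `[- acos s, acos s]%classic.
Proof.
move=> /andP[s0 s1].
have sb : -1 <= s <= 1 by apply/andP; split; lra.
have a0 := acos_ge0 sb; have pi0 := pi_ge0 R.
have api : acos s < pi by apply: acos_ltpi; apply/andP; split => //; lra.
have ca : cos (acos s) = s by apply: acosK; rewrite in_itv /=.
have xpi (x : R) : `|x| <= pi -> `|x| \in `[0, pi].
  by move=> ?; rewrite in_itv /= normr_ge0.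
apply/seteqP; split => x; rewrite /window /= in_itv /= -ler_norml.
  move=> [/andP[h1 h2] hc]; rewrite leNgt; apply/negP => hx.
  have : cos `|x| < cos (acos s).
    by rewrite ltr_cos ?xpi ?ler_norml ?in_itv /= ?a0 //; apply/andP; split; lra.
  by rewrite cos_norm ca; lra.
move=> hx; split; first by move: hx; rewrite ler_norml => /andP[? ?]; apply/andP; split; lra.
rewrite -cos_norm -ca leNgt; apply/negP.
rewrite ltr_cos ?xpi ?in_itv /= ?a0 ?(ltW api) //; first by apply/negP; rewrite -leNgt.
exact: le_trans hx (ltW api).
Qed.

Lemma arc_measure (m : R * R) (s : R) : dotp m m = 1 -> 0 <= s <= 1 ->
  mu (window 0 (2 * pi) [set t | s <= dotp (cis t) m]) = (2 * acos s)%:E.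
Proof.
move=> hm hs; have [psi [/andP[p1 p2] cp sp]] := polar_unit hm.
set S := [set r | s <= cos r].
have mS : measurable S by apply: measurable_continuous_ge; exact: continuous_cos.
have -> : window 0 (2 * pi) [set t | s <= dotp (cis t) m] =
    window 0 (2 * pi) (fun x => S (x + - psi)).
  by apply/seteqP; split => t; rewrite /window /S /dotp /= cosB cp sp.
have pi0 := pi_ge0 R.
rewrite -window_shift // add0r (addrC (2 * pi)).
rewrite -(@window_period _ (2 * pi) (- pi) (- psi)) //; first last.
- by apply/andP; split; lra.
- by move=> x; rewrite /S /= mulr_natl cosD2pi.
rewrite window_cos_ge // lebesgue_measure_itv /= lte_fin.
have sb : -1 <= s <= 1 by case/andP: hs => ? ?; apply/andP; split; lra.
have a0 := acos_ge0 sb.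
case: ifPn => h; first by rewrite -EFinD; congr (_%:E); ring.
by rewrite (_ : acos s = 0) ?mulr0 //; move: h; rewrite -leNgt; lra.
Qed.

Lemma acos_half_angle (c : R) : -1 < c <= 1 ->
  2 * acos (Num.sqrt (1 - c ^+ 2) / Num.sqrt (2 + 2 * c)) = pi - acos c.
Proof.
move=> /andP[c1 c2].
have cb : -1 <= c <= 1 by apply/andP; split; lra.
set h := acos c / 2.
have pi0 := pi_gt0 R.
have h0 : 0 <= h by rewrite divr_ge0 // acos_ge0.
have hpi2 : h < pi / 2.
  by rewrite ltr_pM2r // acos_ltpi //; apply/andP; split.
have c2h : c = cos h ^+ 2 *+ 2 - 1.
  by rewrite -cos_mulr2n (_ : h *+ 2 = acos c) ?acosK ?in_itv //= /h -mulr_natr; field.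
have sh : 0 <= sin h by apply: sin_ge0_pi; apply/andP; split => //; lra.
have L0 : 0 < Num.sqrt (2 + 2 * c) by rewrite sqrtr_gt0; lra.
set r := _ / _.
have r2 : r ^+ 2 = sin h ^+ 2.
  have cos2 : cos h ^+ 2 = (1 + c) / 2 by rewrite c2h; field.
  by rewrite expr_div_n !sqr_sqrtr ?sin2cos2 ?cos2; [field; lra | lra | nra].
have rE : r = sin h.
  by apply/eqP; rewrite -(@eqrXn2 _ 2) ?divr_ge0 ?sqrtr_ge0 ?(ltW L0) ?r2.
rewrite rE -cosBpihalf -cosN opprB cosK; last by rewrite in_itv /=; apply/andP; split; lra.
by rewrite /h; field.
Qed.

Lemma halfplanes_arc_measure (e1 e2 : R * R) :
  dotp e1 e1 = 1 -> dotp e2 e2 = 1 -> -1 < dotp e1 e2 ->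
  mu (window 0 (2 * pi) [set t | 0 <= dotp (cis t) e1 /\ 0 <= dotp (cis t) e2]) =
  (pi - acos (dotp e1 e2))%:E.
Proof.
move=> u1 u2; set c := dotp e1 e2 => c1.
have c2 : c <= 1 by case/andP: (dotp_unit_bound u1 u2).
(* m is the unit bisector of e1 and e2, since |e1 + e2| = L. *)
set L := Num.sqrt (2 + 2 * c).
have L0 : 0 < L by rewrite sqrtr_gt0; lra.
set m : R * R := ((e1.1 + e2.1) / L, (e1.2 + e2.2) / L).
have dotp_m t : dotp (cis t) m = (dotp (cis t) e1 + dotp (cis t) e2) / L.
  by rewrite /dotp /m /=; field; rewrite gt_eqF.
have mm : dotp m m = 1.
  have -> : dotp m m = (dotp e1 e1 + dotp e2 e2 + 2 * c) / L ^+ 2.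
    by rewrite /c /dotp /m /=; field; rewrite gt_eqF.
  by rewrite u1 u2 sqr_sqrtr ?divff //; lra.
set S := Num.sqrt (1 - c ^+ 2).
have SL : 0 <= S / L <= 1.
  rewrite divr_ge0 ?sqrtr_ge0 ?(ltW L0) //= ler_pdivrMr // mul1r ler_sqrt; last lra.
  by have := sqr_ge0 (1 + c); nra.
rewrite -acos_half_angle ?c1 // -/S -/L -(arc_measure mm SL); congr (mu _).
apply/seteqP; split => t [ht h]; split => //=.
  rewrite dotp_m ler_pM2r ?invr_gt0 //.
  exact: (halfplanes_inter_iff u1 u2 (dotp_cis_cis t) c1).1 h.
apply/(halfplanes_inter_iff u1 u2 (dotp_cis_cis t) c1).
by move: h => /=; rewrite dotp_m ler_pM2r ?invr_gt0.
Qed.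

(* The two opposite half-circles both have length pi and cover the circle, so
   their common boundary is negligible. *)
Lemma perp_arc_null (m : R * R) : dotp m m = 1 ->
  mu (window 0 (2 * pi) [set t | dotp (cis t) m = 0]) = 0%E.
Proof.
move=> mm; set m' : R * R := (- m.1, - m.2).
have mm' : dotp m' m' = 1 by rewrite -mm /dotp /=; ring.
have dotpN t : dotp (cis t) m' = - dotp (cis t) m by rewrite /dotp /m' /=; ring.
set A := window 0 (2 * pi) [set t | 0 <= dotp (cis t) m].
set B := window 0 (2 * pi) [set t | 0 <= dotp (cis t) m'].
have half (v : R * R) : dotp v v = 1 ->
    mu (window 0 (2 * pi) [set t | 0 <= dotp (cis t) v]) = pi%:E.
  by move=> vv; rewrite arc_measure ?lexx ?ler01 // acos0; congr (_%:E); field.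
have mhalf (v : R * R) : measurable (window 0 (2 * pi) [set t | 0 <= dotp (cis t) v]).
  by apply: measurable_window; apply: measurable_continuous_ge; exact: continuous_dotp_cis.
have -> : window 0 (2 * pi) [set t | dotp (cis t) m = 0] = A `&` B.
  apply/seteqP; split => t.
    by move=> [ht /= h]; split; split; rewrite //= ?dotpN h ?oppr0.
  move=> [[ht h1] [_]] /=; rewrite dotpN oppr_ge0 => h2.
  by split => //=; apply/eqP; rewrite eq_le h1 h2.
have Afin : (mu A < +oo)%E by rewrite half ?ltry.
have Bfin : (mu B < +oo)%E by rewrite half ?ltry.
have AB : mu (A `|` B) = (mu A + mu B)%E.
  have -> : A `|` B = [set t | 0 <= t < 2 * pi].
    apply/seteqP; split => t /=; first by case => -[].
    move=> ht; have [h|h] := lerP 0 (dotp (cis t) m); first by left.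
    by right; split => //=; rewrite dotpN; lra.
  rewrite lebesgue_measure_halfopen ?mulr_ge0 ?pi_ge0 // !half // subr0 -EFinD.
  by congr (_%:E); ring.
exact: (@measureI_eq0 _ _ _ mu A B (mhalf m) (mhalf _) Afin Bfin AB).
Qed.

End Arcs.

Lemma scaled_circle_outside (R : realType) (e t : R) (a b : pt R) : 0 < e ->
  ~ in_disk (scale e b) (circ (scale e a) t) <->
  0 < 2 * dotp (cis t) (vsub a b) + e * dotp (vsub a b) (vsub a b).
Proof.
move=> e0; rewrite /in_disk /circ /scale /vsub /dotp /=.
have -> : (e * a.1 + cos t - e * b.1) ^+ 2 + (e * a.2 + sin t - e * b.2) ^+ 2 =
    (cos t ^+ 2 + sin t ^+ 2) + e * (2 * (cos t * (a.1 - b.1) + sin t * (a.2 - b.2))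
    + e * ((a.1 - b.1) * (a.1 - b.1) + (a.2 - b.2) * (a.2 - b.2))) by ring.
rewrite cos2Dsin2; split => [h|h]; last by apply/negP; rewrite -ltNge ltrDl pmulr_rgt0.
by rewrite -(pmulr_rgt0 _ e0) -(ltrDl 1) ltNge; apply/negP.
Qed.

Section VisibleArc.
Variables (R : realType) (n : nat) (p : 'I_n -> pt R) (i : 'I_n).
Hypothesis p_inj : injective p.
Notation mu := (@lebesgue_measure R).

Definition offset (j : 'I_n) : R * R := vsub (p i) (p j).
Definition pdist (j : 'I_n) : R := norm2 (offset j).
Definition dir (j : 'I_n) : R * R := ((offset j).1 / pdist j, (offset j).2 / pdist j).

Definition visible_arc (e : R) : set R :=
  window 0 (2 * pi) [set t | forall j : 'I_n, (j < i)%N ->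
    0 < 2 * dotp (cis t) (offset j) + e * dotp (offset j) (offset j)].

Definition limit_arc : set R :=
  window 0 (2 * pi) [set t | forall j : 'I_n, (j < i)%N -> 0 <= dotp (cis t) (dir j)].

Lemma pdist_gt0 (j : 'I_n) : (j < i)%N -> 0 < pdist j.
Proof.
move=> ji; have : p i != p j by apply: contraTneq ji => /p_inj ->; rewrite ltnn.
rewrite /pdist /norm2 /offset /vsub /=; case: (p i) (p j) => [a1 a2] [b1 b2] /=.
rewrite xpair_eqE negb_and sqrtr_gt0 lt_def paddr_eq0 ?sqr_ge0 //.
by rewrite !sqrf_eq0 !subr_eq0 negb_and addr_ge0 ?sqr_ge0 // andbT.
Qed.

Lemma dotp_offset (w : R * R) (j : 'I_n) : (j < i)%N ->
  dotp w (offset j) = pdist j * dotp w (dir j).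
Proof. by move=> ji; rewrite /dotp /dir /=; field; rewrite gt_eqF ?pdist_gt0. Qed.

Lemma dotp_offset_offset (j : 'I_n) : dotp (offset j) (offset j) = pdist j ^+ 2.
Proof. by rewrite /pdist /norm2 sqr_sqrtr ?addr_ge0 ?sqr_ge0 // /dotp !expr2. Qed.

Lemma dotp_dir_dir (j : 'I_n) : (j < i)%N -> dotp (dir j) (dir j) = 1.
Proof.
move=> ji; have dj := pdist_gt0 ji.
have -> : dotp (dir j) (dir j) = dotp (offset j) (offset j) / pdist j ^+ 2.
  by rewrite /dotp /dir /=; field; rewrite gt_eqF.
by rewrite dotp_offset_offset divff // gt_eqF // exprn_gt0.
Qed.

Lemma vangle_dir (j k : 'I_n) : (j < i)%N -> (k < i)%N ->
  vangle (vsub (p j) (p i)) (vsub (p k) (p i)) = acos (dotp (dir j) (dir k)).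
Proof.
move=> ji ki; have dj := pdist_gt0 ji; have dk := pdist_gt0 ki.
have normE l : norm2 (vsub (p l) (p i)) = pdist l.
  by rewrite /pdist /norm2 /offset /vsub /=; congr Num.sqrt; ring.
rewrite /vangle !normE; congr acos.
by rewrite /dotp /dir /offset /vsub /=; field; rewrite !gt_eqF.
Qed.

Lemma visible_paramsE (e : R) : 0 < e ->
  visible_params (fun k => scale e (p k)) i = visible_arc e.
Proof.
move=> e0; apply/seteqP; split => t [ht h]; split => // j ji.
  exact/(scaled_circle_outside t (p i) (p j) e0)/h.
exact/(scaled_circle_outside t (p i) (p j) e0)/h.
Qed.

Lemma measurable_visible_arc (e : R) : measurable (visible_arc e).
Proof.
apply: measurable_window.
have -> : [set t | forall j : 'I_n, (j < i)%N ->
    0 < 2 * dotp (cis t) (offset j) + e * dotp (offset j) (offset j)] =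
  \bigcap_(j in [set j : 'I_n | (j < i)%N])
    [set t | 0 < 2 * dotp (cis t) (offset j) + e * dotp (offset j) (offset j)].
  by apply/seteqP; split => t h j; exact: h.
apply: fin_bigcap_measurable; first exact: finite_finset.
move=> j _; apply: measurable_continuous_gt => x.
by apply: cvgD; [apply: cvgM; [exact: cvg_cst|exact: continuous_dotp_cis]|exact: cvg_cst].
Qed.

Lemma measurable_limit_arc : measurable limit_arc.
Proof.
apply: measurable_window.
have -> : [set t | forall j : 'I_n, (j < i)%N -> 0 <= dotp (cis t) (dir j)] =
  \bigcap_(j in [set j : 'I_n | (j < i)%N]) [set t | 0 <= dotp (cis t) (dir j)].
  by apply/seteqP; split => t h j; exact: h.
apply: fin_bigcap_measurable; first exact: finite_finset.
by move=> j _; apply: measurable_continuous_ge; exact: continuous_dotp_cis.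
Qed.

Lemma visible_arc_le (e e' : R) : e <= e' -> visible_arc e `<=` visible_arc e'.
Proof.
move=> ee t [ht h]; split => // j ji; apply: (lt_le_trans (h j ji)).
by rewrite lerD2l ler_wpM2r // dotp_offset_offset sqr_ge0.
Qed.

Lemma limit_arc_sub (e : R) : 0 < e -> limit_arc `<=` visible_arc e.
Proof.
move=> e0 t [ht h]; split => // j ji; have dj := pdist_gt0 ji.
rewrite dotp_offset // dotp_offset_offset.
have := h j ji; have : 0 < e * pdist j ^+ 2 by rewrite mulr_gt0 // exprn_gt0.
by nra.
Qed.

Lemma bigcap_visible_arc : \bigcap_k visible_arc k.+1%:R^-1 = limit_arc.
Proof.
apply/seteqP; split; last by move=> t Wt k _; apply: limit_arc_sub Wt; rewrite invr_gt0.
move=> t h; have [ht _] := h 0%N I; split => // j ji; rewrite leNgt; apply/negP => g0.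
have dj := pdist_gt0 ji.
have pos : 0 < - (2 * dotp (cis t) (dir j)) / pdist j by rewrite divr_gt0 //; lra.
have [k] := ltr_add_invr pos; rewrite add0r => hk.
have := (h k I).2 j ji; rewrite dotp_offset // dotp_offset_offset.
rewrite (_ : _ + _ = pdist j * (2 * dotp (cis t) (dir j) + k.+1%:R^-1 * pdist j)).
  rewrite pmulr_rgt0 //; move: hk; rewrite ltr_pdivlMr //.
  by move: (k.+1%:R^-1 * pdist j) (dotp (cis t) (dir j)) => a b; lra.
by ring.
Qed.

Lemma visible_measure_cvg :
  (fun e => mu (visible_params (fun k => scale e (p k)) i)) @ 0^'+ --> mu limit_arc.
Proof.
set f := fun e => _.
have fE e : 0 < e -> f e = mu (visible_arc e) by move=> e0; rewrite /f visible_paramsE.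
have ndf : {in Interval (BRight (0:R)) +oo%O &, nondecreasing_fun f}.
  move=> x y; rewrite !in_itv /= !andbT => x0 y0 xy.
  rewrite !fE //; apply: le_measure; rewrite ?inE; try exact: measurable_visible_arc.
  exact: visible_arc_le.
suff <- : ereal_inf (f @` [set` Interval (BRight (0:R)) +oo%O]) = mu limit_arc.
  exact: nondecreasing_at_right_cvge.
have cF : mu \o (fun k => visible_arc k.+1%:R^-1) @ \oo --> mu limit_arc.
  rewrite -bigcap_visible_arc; apply: nonincreasing_cvg_mu.
  - apply: (le_lt_trans (y := mu [set t : R | 0 <= t < 2 * pi])).
      apply: le_measure; rewrite ?inE; [exact: measurable_visible_arc|exact: measurable_halfopen|].
      by move=> t [].
    by rewrite lebesgue_measure_halfopen ?ltry // mulr_ge0 // pi_ge0.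
  - by move=> k; exact: measurable_visible_arc.
  - by rewrite bigcap_visible_arc; exact: measurable_limit_arc.
  - apply/nonincreasing_seqP => k; apply/subsetPset; apply: visible_arc_le.
    by rewrite lef_pV2 ?posrE ?ltr0n // ler_nat.
apply/eqP; rewrite eq_le; apply/andP; split.
  apply: (cvge_ge _ cF); apply: nearW => k /=.
  apply: ereal_inf_lbound; exists (k.+1%:R^-1); last by rewrite fE.
  by rewrite /= in_itv /= andbT invr_gt0 ltr0n.
apply: le_ereal_inf_tmp => y [e]; rewrite /= in_itv /= andbT => e0 <-.
rewrite fE //; apply: le_measure; rewrite ?inE;
  [exact: measurable_limit_arc|exact: measurable_visible_arc|exact: limit_arc_sub].
Qed.

Lemma in_conv_prefix_of_weights (m : 'I_n -> R) :
  (forall j, 0 <= m j) -> (forall j : 'I_n, ~~ (j < i)%N -> m j = 0) -> 0 < \sum_(j < n) m j ->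
  \sum_(j < n) m j * (offset j).1 = 0 -> \sum_(j < n) m j * (offset j).2 = 0 ->
  in_conv_prefix p i (p i).
Proof.
move=> m0 mi; set M := \sum_(j < n) m j => M0 s1 s2.
have barycenter (x : R) (y : 'I_n -> R) :
    \sum_(j < n) m j * (x - y j) = 0 -> x = \sum_(j < n) m j / M * y j.
  rewrite (eq_bigr (fun j => x * m j - m j * y j)); last by move=> j _; ring.
  rewrite sumrB -mulr_sumr -/M => /eqP; rewrite subr_eq0 => /eqP xM.
  rewrite (eq_bigr (fun j => m j * y j / M)); last by move=> j _; rewrite mulrAC.
  by rewrite -mulr_suml -xM mulfK // gt_eqF.
exists (fun j => m j / M); split => [j|j /mi ->||].
- by rewrite divr_ge0 // ltW.
- by rewrite mul0r.
- by rewrite -mulr_suml divff // gt_eqF.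
- by rewrite [p i]surjective_pairing; congr (_, _); apply: barycenter.
Qed.

Lemma in_conv_prefix_of_dependence (a b c : 'I_n) (la lb lc : R) :
  (a < i)%N -> (b < i)%N -> (c < i)%N -> 0 <= la -> 0 <= lb -> 0 <= lc ->
  0 < la + lb + lc ->
  la * (dir a).1 + lb * (dir b).1 + lc * (dir c).1 = 0 ->
  la * (dir a).2 + lb * (dir b).2 + lc * (dir c).2 = 0 ->
  in_conv_prefix p i (p i).
Proof.
move=> ai bi ci la0 lb0 lc0 l0 e1 e2.
pose pick (x : 'I_n) (l : R) (j : 'I_n) := if j == x then l / pdist x else 0.
have pick_sum x l (F : 'I_n -> R) : \sum_(j < n) pick x l j * F j = l / pdist x * F x.
  by rewrite (bigD1 x) //= /pick eqxx big1 ?addr0 // => j /negbTE ->; rewrite mul0r.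
have pick_ge0 (x : 'I_n) l j : (x < i)%N -> 0 <= l -> 0 <= pick x l j.
  by move=> xi l_ge0; rewrite /pick; case: ifP => // _; rewrite divr_ge0 // ltW ?pdist_gt0.
have pick_out (x j : 'I_n) l : (x < i)%N -> ~~ (j < i)%N -> pick x l j = 0.
  by move=> xi ji; rewrite /pick; case: eqP => // jx; move: ji; rewrite jx xi.
pose m j := pick a la j + pick b lb j + pick c lc j.
have msum (F : 'I_n -> R) : \sum_(j < n) m j * F j =
    la / pdist a * F a + lb / pdist b * F b + lc / pdist c * F c.
  by under eq_bigr do rewrite !mulrDl; rewrite !big_split /= !pick_sum.
have da := pdist_gt0 ai; have db := pdist_gt0 bi; have dc := pdist_gt0 ci.
apply: (@in_conv_prefix_of_weights m) => [j|j ji|||].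
- by rewrite !addr_ge0 ?pick_ge0.
- by rewrite /m !pick_out ?addr0.
- rewrite -(eq_bigr _ (fun j _ => mulr1 (m j))) msum !mulr1.
  have ta : la / pdist a * pdist a = la by rewrite divfK // gt_eqF.
  have tb : lb / pdist b * pdist b = lb by rewrite divfK // gt_eqF.
  have tc : lc / pdist c * pdist c = lc by rewrite divfK // gt_eqF.
  move: ta tb tc; set xa := la / _; set xb := lb / _; set xc := lc / _ => ta tb tc.
  have xa0 : 0 <= xa by apply: divr_ge0 => //; exact: ltW.
  have xb0 : 0 <= xb by apply: divr_ge0 => //; exact: ltW.
  have xc0 : 0 <= xc by apply: divr_ge0 => //; exact: ltW.
  by nra.
- by rewrite msum -[RHS]e1 /dir /=; field; rewrite !gt_eqF.
- by rewrite msum -[RHS]e2 /dir /=; field; rewrite !gt_eqF.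
Qed.

Lemma limit_arc_first : (i : nat) = 0%N -> mu limit_arc = (2 * pi)%:E.
Proof.
move=> i0; rewrite -[X in X%:E]subr0 -lebesgue_measure_halfopen ?mulr_ge0 ?pi_ge0 //.
by congr (mu _); apply/seteqP; split => t; [case | split => // j; rewrite i0].
Qed.

Lemma limit_arc_orthogonal : in_conv_prefix p i (p i) ->
  exists2 j0 : 'I_n, (j0 < i)%N &
    limit_arc `<=` window 0 (2 * pi) [set t | dotp (cis t) (dir j0) = 0].
Proof.
move=> [w [w0 wi w1 pE]].
have [j0 /andP[j0i wj0]] : exists j0 : 'I_n, (j0 < i)%N && (0 < w j0).
  apply/existsP; apply: contraT; rewrite negb_exists => /forallP wle.
  suff : \sum_(j < n) w j = 0 by rewrite w1 => /eqP; rewrite oner_eq0.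
  apply: big1 => j _; have [ji|ji] := ltnP j i; last by apply: wi; rewrite -leqNgt.
  by apply/eqP; rewrite eq_le w0 andbT; move: (wle j); rewrite ji /= -leNgt.
exists j0 => // t [ht h]; split => //=.
have term_ge0 (j : 'I_n) : true -> 0 <= w j * dotp (cis t) (offset j).
  move=> _; have [ji|ji] := ltnP j i; last by rewrite wi ?mul0r // -leqNgt.
  by rewrite mulr_ge0 // dotp_offset // mulr_ge0 ?h // ltW ?pdist_gt0.
have : \sum_(j < n) w j * dotp (cis t) (offset j) = 0.
  rewrite (eq_bigr (fun j => cos t * (w j * (p i).1 - w j * (p j).1)
      + sin t * (w j * (p i).2 - w j * (p j).2))); last by move=> j _; rewrite /dotp /=; ring.
  rewrite big_split /= -!mulr_sumr !sumrB -!mulr_suml w1 !mul1r.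
  by rewrite {1 2}pE /= !subrr !mulr0 addr0.
move=> /(psumr_eq0P term_ge0)/(_ j0 isT)/eqP.
rewrite dotp_offset // mulf_eq0 gt_eqF //= mulf_eq0 gt_eqF ?pdist_gt0 //=.
by move/eqP.
Qed.

Lemma limit_arc_conv : in_conv_prefix p i (p i) -> mu limit_arc = 0%E.
Proof.
move=> /limit_arc_orthogonal [j0 j0i sub]; apply/eqP; rewrite eq_le measure_ge0 andbT.
rewrite -(perp_arc_null (dotp_dir_dir j0i)).
apply: le_measure; rewrite ?inE; [exact: measurable_limit_arc| |exact: sub].
by apply: measurable_window; apply: measurable_continuous_eq; exact: continuous_dotp_cis.
Qed.

Lemma interior_angle_attained : (0 < i)%N ->
  exists j k : 'I_n, [/\ (j < i)%N, (k < i)%N,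
    interior_angle p i = acos (dotp (dir j) (dir k)) &
    forall j' k' : 'I_n, (j' < i)%N -> (k' < i)%N ->
      dotp (dir j) (dir k) <= dotp (dir j') (dir k')].
Proof.
move=> i0; pose j1 : 'I_n := Ordinal (ltn_trans i0 (ltn_ord i)).
have j1i : (j1 < i)%N by [].
pose G (j k : 'I_n) := acos (dotp (dir j) (dir k)).
pose F (j : 'I_n) := \big[Num.max/0]_(k < n | (k < i)%N) G j k.
have dotp_bound (j k : 'I_n) : (j < i)%N -> (k < i)%N -> -1 <= dotp (dir j) (dir k) <= 1.
  by move=> ji ki; apply: dotp_unit_bound; exact: dotp_dir_dir.
have G0 (j k : 'I_n) : (j < i)%N -> (k < i)%N -> 0 <= G j k.
  by move=> ji ki; apply: acos_ge0; exact: dotp_bound.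
have IA : interior_angle p i = \big[Num.max/0]_(j < n | (j < i)%N) F j.
  by apply: eq_bigr => j ji; apply: eq_bigr => k ki; rewrite vangle_dir.
have F0 (j : 'I_n) : (j < i)%N -> 0 <= F j.
  by move=> ji; apply: le_trans (G0 _ _ ji j1i) (le_bigmax_cond _ (G j) j1i).
have [js jsi jsE] := eq_bigmax (x := 0) j1 (fun j : 'I_n => (j < i)%N) F j1i F0.
have [ks ksi ksE] := eq_bigmax (x := 0) j1 (fun k : 'I_n => (k < i)%N) (G js) j1i
  (fun k => G0 js k jsi).
rewrite /= in jsi ksi.
have IAE : interior_angle p i = G js ks by rewrite IA jsE /F ksE.
exists js, ks; split => // j k ji ki.
apply: le_of_acos_le; rewrite ?dotp_bound // -/(G js ks) -IAE IA.
by apply: le_trans (le_bigmax_cond _ F ji); exact: (le_bigmax_cond _ (G j)).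
Qed.

Lemma limit_arc_vertex : (0 < i)%N -> ~ in_conv_prefix p i (p i) ->
  mu limit_arc = (pi - interior_angle p i)%:E.
Proof.
move=> i0 nconv; have [js [ks [jsi ksi -> cmin]]] := interior_angle_attained i0.
set e1 := dir js; set e2 := dir ks.
have u1 : dotp e1 e1 = 1 by exact: dotp_dir_dir.
have u2 : dotp e2 e2 = 1 by exact: dotp_dir_dir.
have c1 : -1 < dotp e1 e2.
  rewrite ltNge; apply/negP => c_le; apply: nconv.
  have c_eq : dotp e1 e2 = -1 by apply/eqP; rewrite eq_le c_le; case/andP: (dotp_unit_bound u1 u2).
  have opp : (e1.1 + e2.1) ^+ 2 + (e1.2 + e2.2) ^+ 2 =
      dotp e1 e1 + dotp e2 e2 + 2 * dotp e1 e2 by rewrite /dotp; ring.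
  rewrite u1 u2 c_eq in opp.
  have := sqr_ge0 (e1.1 + e2.1); have := sqr_ge0 (e1.2 + e2.2) => h2 h1.
  apply: (@in_conv_prefix_of_dependence js ks js 1 1 0) => //; try lra.
    by apply/eqP; rewrite mul0r addr0 !mul1r -sqrf_eq0; apply/eqP; lra.
  by apply/eqP; rewrite mul0r addr0 !mul1r -sqrf_eq0; apply/eqP; lra.
rewrite -halfplanes_arc_measure //; congr (mu _).
apply/seteqP; split => t [ht h]; split => //; first by split; apply: h.
move=> l li; have ul := dotp_dir_dir li.
have [|[l0 [l1 [l2 [l00 l10 l20 E1 E2]]]]] :=
  cone_or_dependence u1 u2 ul c1 (cmin _ _ li jsi) (cmin _ _ li ksi).
  by apply; case: h.
exfalso; apply: nconv.
by apply: (@in_conv_prefix_of_dependence l js ks l0 l1 l2) => //; lra.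
Qed.

Lemma limit_arc_measure : mu limit_arc = (tau p i)%:E.
Proof.
rewrite /tau; have [i0|i0] := eqVneq (i : nat) 0%N; first exact: limit_arc_first.
case: asboolP => h; first exact: limit_arc_conv.
by apply: limit_arc_vertex => //; rewrite lt0n.
Qed.

End VisibleArc.

Theorem lemma7 (R : realType) (n : nat) (p : 'I_n -> pt R) :
  injective p ->
  (fun e : R => vis (fun i => scale e (p i))) @ 0^'+ -->
    ((\sum_(i < n) tau p i)%:E).
Proof.
move=> p_inj; rewrite -sumEFin /vis.
apply: cvg_nnesum => [j _|j _]; first by apply: nearW => e; exact: measure_ge0.
by rewrite -(limit_arc_measure j p_inj); exact: visible_measure_cvg.
Qed.
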